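(* For every reverse semistandard Young tableau $V$, the right row-filling algorithm $\psi(V)$ is a well-defined element of $\mathrm{qKT}^{(1)}$, and $\psi:\mathrm{revSSYT}\to\mathrm{qKT}^{(1)}$ is a bijection with inverse $\phi$. Both maps preserve column sets.
   Context: $\mathrm{revSSYT}$ is the set of reverse semistandard Young tableaux of all partition shapes (English notation; positive integer entries; rows weakly decreasing left to right, columns strictly decreasing top to bottom). The $c$th column set of a tableau or filling is the set of entries in its $c$th column. For a weak composition $a$, $D(a)$ has $a_i$ left-justified boxes in row $i$, row 1 lowest. A quasi-key tableau of shape $a$ is a filling of $D(a)$ with positive integers such that (1) entries weakly decrease along rows and no entry of row $i$ exceeds $i$; (2) entries in each column are distinct and increase going up the first column; (3) if an entry $i$ is above an entry $k$ in the same column with $i<k$, there is an entry $j$ immediately right of $k$ with $i<j$; (4) for two rows with the higher row strictly longer, if $i$ is in column $c$ of the lower row and $j$ in column $c+1$ of the higher row, then $i<j$. $\mathrm{qKT}^{(1)}$ is the set of all quasi-key tableaux (of all shapes $a$) whose first-column entries equal their row indices. $\phi(T)$ for $T\in\mathrm{qKT}^{(1)}$: the top-justified tableau whose $c$th column consists of the entries of column $c$ of $T$ sorted decreasingly from top to bottom. Right row-filling $\psi(V)$: let $C_1,C_2,\ldots$ be the column sets of $V$. Repeat until all are empty: let $k$ be the largest index with $C_k$ nonempty; choose the smallest element $y_k$ of $C_k$; for $c=k-1,\ldots,1$ choose the smallest element $y_c$ of $C_c$ with $y_c\ge y_{c+1}$; make $(y_1,\ldots,y_k)$ (left to right) the row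 of index $y_1$ of the output filling; delete $y_1,\ldots,y_k$ from their column sets. The output is a filling of a skyline diagram. *)

From mathcomp Require Import all_boot.
Set Implicit Arguments.
Unset Strict Implicit.
Unset Printing Implicit Defensive.

(* A tableau / filling is a list of rows, each row a list of entries read
   left to right.  Columns are 1-indexed. *)

Definition colset (T : seq (seq nat)) (c : nat) : seq nat :=
  [seq nth 0 r c.-1 | r <- T & 0 < c <= size r].

(* ---------- Reverse semistandard Young tableaux (English notation) -------
   V lists the rows from top to bottom. *)
Definition revSSYT (V : seq (seq nat)) : Prop :=
  [/\ all (fun r => r != [::]) V,
      sorted geq (map size V),
      all (all (fun x => 0 < x)) V,
      all (sorted geq) V &
      forall i c, c < size (nth [::] V i.+1) ->
        nth 0 (nth [::] V i.+1) c < nth 0 (nth [::] V i) c].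

(* ---------- Fillings of skyline diagrams D(a) -------------------------------
   F lists the rows from the bottom (row 1) upwards; row i (1-indexed) is
   nth [::] F i.-1, and a_i = size of row i. *)
Definition frow (F : seq (seq nat)) (i : nat) : seq nat := nth [::] F i.-1.
Definition fent (F : seq (seq nat)) (i c : nat) : nat := nth 0 (frow F i) c.-1.
Definition fcell (F : seq (seq nat)) (i c : nat) : bool :=
  (0 < i <= size F) && (0 < c <= size (frow F i)).

Definition qKT (F : seq (seq nat)) : Prop :=
  (forall i c, fcell F i c -> 0 < fent F i c <= i) /\
  (forall i, sorted geq (frow F i)) /\
  (forall i j c, fcell F i c -> fcell F j c -> i != j ->
     fent F i c != fent F j c) /\
  (forall i j, i < j -> fcell F i 1 -> fcell F j 1 ->
     fent F i 1 < fent F j 1) /\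
  (* (3) if entry x (row q) is above entry k (row p < q) in the same column
         and x < k, then there is an entry y immediately right of k, x < y *)
  (forall p q c, p < q -> fcell F p c -> fcell F q c ->
     fent F q c < fent F p c ->
     fcell F p c.+1 && (fent F q c < fent F p c.+1)) /\
  (* (4) lower row p, higher row q strictly longer: entry in column c of row p
         is less than entry in column c+1 of row q *)
  (forall p q c, p < q -> size (frow F p) < size (frow F q) ->
     fcell F p c -> fcell F q c.+1 -> fent F p c < fent F q c.+1).

(* qKT^(1): canonical representative of the weak composition (no trailing
   empty rows) and first-column entries equal their row indices. *)
Definition qKT1 (F : seq (seq nat)) : Prop :=
  qKT F /\ (F = [::] \/ last [::] F <> [::]) /\
  (forall i, fcell F i 1 -> fent F i 1 = i).

Definition ncols (T : seq (seq nat)) : nat := foldr maxn 0 (map size T).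

Definition phi (T : seq (seq nat)) : seq (seq nat) :=
  let cols := mkseq (fun c => sort geq (colset T c.+1)) (ncols T) in
  mkseq (fun r => [seq nth 0 C r | C <- cols & r < size C])
        (foldr maxn 0 (map size cols)).

Definition omin (s : seq nat) : option nat :=
  if s is x :: s' then Some (foldr minn x s') else None.

Fixpoint trim (s : seq (seq nat)) : seq (seq nat) :=
  if s is x :: s' then
    let t := trim s' in if (t == [::]) && (x == [::]) then [::] else x :: t
  else [::].

(* Given the column sets C_k, C_{k-1}, ..., C_1 (reversed) and a lower bound b,
   choose y_k = min C_k (b = 0), then y_c = min {x in C_c | x >= y_{c+1}}.
   Returns [:: y_k; ...; y_1], or None if some choice is impossible. *)
Fixpoint pick_chain (b : nat) (rcs : seq (seq nat)) : option (seq nat) :=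
  match rcs with
  | [::] => Some [::]
  | C :: rcs' =>
      match omin [seq x <- C | b <= x] with
      | None => None
      | Some y =>
          match pick_chain y rcs' with
          | None => None
          | Some ys => Some (y :: ys)
          end
      end
  end.

Fixpoint psi_rows (fuel : nat) (cols : seq (seq nat)) : option (seq (seq nat)) :=
  let tc := trim cols in
  if tc is [::] then Some [::] else
  match fuel with
  | 0 => None
  | n.+1 =>
      match pick_chain 0 (rev tc) with
      | None => None
      | Some ys =>
          let row := rev ys in
          let cols' := map (fun p => rem p.1 p.2) (zip row tc) in
          match psi_rows n cols' with
          | None => None
          | Some rs => Some (row :: rs)
          end
      end
  end.

(* Place each row (y_1,...,y_k) as row number y_1 of a skyline filling
   (rows listed bottom to top, unused rows empty). *)
Definition place_rows (R : seq (seq nat)) : seq (seq nat) :=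
  mkseq (fun i => nth [::] R (find (fun r => head 0 r == i.+1) R))
        (foldr maxn 0 (map (head 0) R)).

(* psi V: None when the algorithm is not well defined (a choice fails, or two
   produced rows would get the same row index, or an index 0). *)
Definition psi (V : seq (seq nat)) : option (seq (seq nat)) :=
  let cols := mkseq (fun c => colset V c.+1) (ncols V) in
  match psi_rows (sumn (map size V)) cols with
  | None => None
  | Some R =>
      if uniq (map (head 0) R) && all (fun r => 0 < head 0 r) R
      then Some (place_rows R) else None
  end.

(* psi peels the rows of a quasi-key tableau off its column sets, one greedy
   chain at a time.  The column sets of a reverse SSYT are dominated from left to
   right (for every t, column c+1 has at most as many entries >= t as column c);
   dominance guarantees that a greedy chain exists, and it survives the removal
   of that chain.  The minimality of its entries makes each chain compatible, in
   the sense of conditions (2)-(4), with all the rows built after it, so psi V is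
   a quasi-key tableau with the column sets of V.  Conversely, among the rows of
   a quasi-key tableau, the longest one with the smallest first entry is the
   greedy chain of its column sets, so psi rebuilds T from the column sets of
   phi T.  A reverse SSYT is determined by its column sets (sort them), and so is
   an element of qKT^(1) (put each row at the index given by its first entry);
   hence phi and psi are mutually inverse. *)

From mathcomp Require Import all_boot.
Set Implicit Arguments.
Unset Strict Implicit.
Unset Printing Implicit Defensive.

Lemma geq_total : total geq.
Proof. by move=> m n; apply: leq_total. Qed.

Lemma geq_trans : transitive geq.
Proof. exact: rev_trans leq_trans. Qed.

Lemma geq_anti : antisymmetric geq.
Proof. by move=> m n /andP[le_nm le_mn]; apply/anti_leq/andP. Qed.

Lemma sorted_geq_nth r i j :
  sorted geq r -> i <= j -> j < size r -> nth 0 r j <= nth 0 r i.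
Proof.
move=> r_sorted le_ij lt_j; have lt_i := leq_ltn_trans le_ij lt_j.
by apply: (sorted_leq_nth geq_trans (fun n => leqnn n) 0 r_sorted).
Qed.

Lemma sorted_geq_head r x : sorted geq r -> x \in r -> x <= head 0 r.
Proof. by move=> r_sorted /(nthP 0) [i lt_i <-]; rewrite -nth0 sorted_geq_nth. Qed.

Lemma sorted_geq_uniq_nth s i : sorted geq s -> uniq s -> i.+1 < size s ->
  nth 0 s i.+1 < nth 0 s i.
Proof.
move=> s_sorted s_uniq lt_i; rewrite ltn_neqAle sorted_geq_nth // andbT.
by rewrite nth_uniq // ?(ltnW lt_i) // neq_ltn ltnSn orbT.
Qed.

Lemma sorted_geq_count s t i : sorted geq s ->
  (i < count (leq t) s) = (i < size s) && (t <= nth 0 s i).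
Proof.
elim: s i => [|x s IHs] i //= s_sorted.
have [le_tx|lt_xt] := leqP t x.
  by case: i => [|i] //=; rewrite add1n ltnS IHs ?(path_sorted s_sorted).
have below_t y : y \in x :: s -> y < t.
  by move=> ys; apply: leq_ltn_trans (sorted_geq_head (r := x :: s) s_sorted ys) lt_xt.
rewrite (eq_in_count (a2 := pred0)) => [|y ys]; last first.
  by apply/negbTE; rewrite -ltnNge below_t // mem_behead.
rewrite count_pred0 ltn0; case: ltnP => //= lt_i.
by apply/esym/negbTE; rewrite -ltnNge below_t // mem_nth.
Qed.

Lemma eq_from_ltn m n : (forall i, (i < m) = (i < n)) -> m = n.
Proof.
by move=> eq_lt; apply/anti_leq; rewrite (leqNgt m n) (leqNgt n m) -eq_lt ltnn eq_lt ltnn.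
Qed.

Lemma leq_foldr_maxn (s : seq nat) x : x \in s -> x <= foldr maxn 0 s.
Proof. by rewrite foldrE => xs; apply: (leq_bigmax_seq _ xs). Qed.

Lemma foldr_maxn_leqP (s : seq nat) m :
  reflect (forall x, x \in s -> x <= m) (foldr maxn 0 s <= m).
Proof.
rewrite foldrE; apply: (iffP (bigmax_leqP_seq _ _ _ _)) => H x xs; first exact: H.
by move=> _; apply: H.
Qed.

Lemma foldr_maxn_mem (s : seq nat) : 0 < foldr maxn 0 s -> foldr maxn 0 s \in s.
Proof.
elim: s => [|x s IHs] //=; rewrite inE.
by case: (leqP (foldr maxn 0 s) x) => _; [rewrite eqxx | move=> /IHs ->; rewrite orbT].
Qed.

Lemma foldr_maxn_sorted (s : seq nat) : sorted geq s -> foldr maxn 0 s = head 0 s.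
Proof.
move=> s_sorted; apply/anti_leq/andP; split.
  by apply/foldr_maxn_leqP => x; apply: sorted_geq_head.
by case: s s_sorted => //= x s _; rewrite leq_maxl.
Qed.

Lemma perm_rem (T : eqType) (x : T) (s t : seq T) :
  perm_eq s t -> perm_eq (rem x s) (rem x t).
Proof.
move=> /[dup] /permP eq_count /perm_mem eq_mem.
by apply/permP => P; rewrite !count_rem eq_count eq_mem.
Qed.

Lemma uniq_map_inj (T U : eqType) (f : T -> U) s : uniq (map f s) -> {in s &, injective f}.
Proof.
elim: s => [|z s IHs] //= /andP[fz_notin uniq_fs] x y.
rewrite !inE => /orP[/eqP->|xs] /orP[/eqP->|ys] // eq_f.
- by move: fz_notin; rewrite eq_f map_f.
- by move: fz_notin; rewrite -eq_f map_f.
- exact: IHs.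
Qed.

Lemma mem_nth_size (T : eqType) (cs : seq (seq T)) c x :
  x \in nth [::] cs c -> c < size cs.
Proof. by case: (ltnP c (size cs)) => // le_c; rewrite nth_default. Qed.

Definition col (T : seq (seq nat)) (c : nat) : seq nat :=
  [seq nth 0 r c | r <- T & c < size r].

Lemma colsetS T c : colset T c.+1 = col T c.
Proof. by []. Qed.

Lemma colset0 T : colset T 0 = [::].
Proof. by rewrite /colset; elim: T. Qed.

Lemma col_cons r T c :
  col (r :: T) c = if c < size r then nth 0 r c :: col T c else col T c.
Proof. by rewrite /col /=; case: ifP. Qed.

Lemma size_col T c : size (col T c) = count (fun r => c < size r) T.
Proof. by rewrite size_map size_filter. Qed.

Lemma mem_col T r c : r \in T -> c < size r -> nth 0 r c \in col T c.
Proof. by move=> rT lt_c; apply: map_f; rewrite mem_filter lt_c. Qed.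

Lemma colP T c x : x \in col T c -> exists2 r, r \in T & c < size r /\ x = nth 0 r c.
Proof. by case/mapP=> r; rewrite mem_filter => /andP[lt_c rT] ->; exists r. Qed.

Lemma perm_col T T' c : perm_eq T T' -> perm_eq (col T c) (col T' c).
Proof. by move=> eqTT'; apply/perm_map/perm_filter. Qed.

Lemma col_nil T c : {in T, forall r, size r <= c} -> col T c = [::].
Proof.
move=> short_rows; apply/eqP; rewrite -size_eq0 size_col -leqn0 leqNgt -has_count.
by apply/hasPn => r /short_rows; rewrite -leqNgt.
Qed.

Lemma col_filter_nil T c : col [seq r <- T | r != [::]] c = col T c.
Proof. by elim: T => [|r T IHT] //=; case: eqP => [->|_]; rewrite !col_cons IHT. Qed.

Lemma size_col_leq_sumn T c : size (col T c) <= sumn (map size T).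
Proof.
elim: T => [|r T IHT] //=; rewrite col_cons; case: ifP => lt_c /=.
  by rewrite -add1n leq_add // (leq_ltn_trans _ lt_c).
exact: leq_trans IHT (leq_addl _ _).
Qed.

Lemma col_ncols T c : ncols T <= c -> col T c = [::].
Proof.
by move=> le_c; apply: col_nil => r rT; apply: leq_trans le_c; apply/leq_foldr_maxn/map_f.
Qed.

Lemma nth_colsets T c :
  nth [::] (mkseq (fun c => colset T c.+1) (ncols T)) c = col T c.
Proof.
case: (ltnP c (ncols T)) => [lt_c|le_c]; first by rewrite nth_mkseq.
by rewrite nth_default ?size_mkseq ?col_ncols.
Qed.

Lemma sorted_size_head (r : seq nat) T q :
  sorted geq (map size (r :: T)) -> q \in T -> size q <= size r.
Proof.
by move=> /sorted_geq_head le_head qT; apply: le_head; apply: map_f; rewrite inE qT orbT.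
Qed.

Section ShapedColumns.

Variable T : seq (seq nat).
Hypothesis T_sorted : sorted geq (map size T).

Lemma ltn_size_col c i : (i < size (col T c)) = (c < size (nth [::] T i)).
Proof.
rewrite size_col -(count_map size (leq c.+1)) sorted_geq_count // size_map.
case: (ltnP i (size T)) => lt_i; first by rewrite (nth_map [::]).
by rewrite nth_default ?size_map // nth_default.
Qed.

Lemma nth_col c i : i < size (col T c) -> nth 0 (col T c) i = nth 0 (nth [::] T i) c.
Proof.
elim: T T_sorted i => [|r T' IHT] //= sorted_rT i; rewrite col_cons.
case: ifP => [_|/negbT]; first by case: i => //= i; apply: IHT (path_sorted sorted_rT) i.
rewrite -leqNgt => le_r; rewrite col_nil // => q /(sorted_size_head sorted_rT) le_q.
exact: leq_trans le_r.
Qed.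

End ShapedColumns.

Definition partition_shaped (T : seq (seq nat)) :=
  all (fun r => r != [::]) T && sorted geq (map size T).

Lemma size_col0 T : all (fun r => r != [::]) T -> size (col T 0) = size T.
Proof.
move=> nonempty; rewrite size_col (eq_in_count (a2 := predT)) ?count_predT //.
by move=> r /(allP nonempty); case: r.
Qed.

Lemma eq_from_col T T' : partition_shaped T -> partition_shaped T' ->
  (forall c, col T c = col T' c) -> T = T'.
Proof.
move=> /andP[nonempty sorted_T] /andP[nonempty' sorted_T'] eq_col.
have eq_size : size T = size T' by rewrite -size_col0 // -size_col0 // eq_col.
apply: (eq_from_nth (x0 := [::])) => // i lt_i.
have eq_size_i : size (nth [::] T i) = size (nth [::] T' i).
  by apply: eq_from_ltn => c; rewrite -!ltn_size_col // eq_col.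
apply: (eq_from_nth (x0 := 0)) => // c lt_c.
by rewrite -nth_col // ?eq_col ?nth_col // -?eq_col ltn_size_col.
Qed.

(** * Transposition and phi *)

Definition transpose (cols : seq (seq nat)) : seq (seq nat) :=
  mkseq (col cols) (foldr maxn 0 (map size cols)).

Section Transpose.

Variable cols : seq (seq nat).
Hypothesis cols_sorted : sorted geq (map size cols).

Lemma nth_transpose r : nth [::] (transpose cols) r = col cols r.
Proof.
case: (ltnP r (foldr maxn 0 (map size cols))) => [lt_r|]; first by rewrite nth_mkseq.
move=> /foldr_maxn_leqP short; rewrite nth_default ?size_mkseq; last exact/foldr_maxn_leqP.
by rewrite col_nil // => C /(map_f size) /short.
Qed.

Lemma transpose_shaped : partition_shaped (transpose cols).
Proof.
apply/andP; split.
  apply/allP => _ /(nthP [::]) [r lt_r <-].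
  rewrite nth_transpose -size_eq0 -lt0n ltn_size_col //.
  by move: lt_r; rewrite size_mkseq foldr_maxn_sorted //; case: (cols).
apply/(sortedP 0) => r; rewrite size_map => lt_r.
rewrite !(nth_map [::]) ?(ltnW lt_r) // !nth_transpose !size_col.
by apply: sub_count => C /= /ltnW.
Qed.

Lemma col_transpose c : col (transpose cols) c = nth [::] cols c.
Proof.
have [_ sorted_t] := andP transpose_shaped.
have eq_size : size (col (transpose cols) c) = size (nth [::] cols c).
  by apply: eq_from_ltn => i; rewrite ltn_size_col // nth_transpose ltn_size_col.
apply: (eq_from_nth (x0 := 0)) => // i lt_i.
by rewrite nth_col // nth_transpose nth_col // ltn_size_col // -eq_size.
Qed.

End Transpose.

Definition sorted_cols (T : seq (seq nat)) : seq (seq nat) :=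
  mkseq (fun c => sort geq (colset T c.+1)) (ncols T).

Lemma phiE T : phi T = transpose (sorted_cols T).
Proof. by []. Qed.

Lemma nth_sorted_cols T c : nth [::] (sorted_cols T) c = sort geq (col T c).
Proof.
case: (ltnP c (ncols T)) => [lt_c|le_c]; first by rewrite nth_mkseq.
by rewrite nth_default ?size_mkseq ?col_ncols.
Qed.

Lemma size_colS T c : size (col T c.+1) <= size (col T c).
Proof. by rewrite !size_col; apply: sub_count => r /ltnW. Qed.

Lemma sorted_cols_sorted T : sorted geq (map size (sorted_cols T)).
Proof.
apply/(sortedP 0) => c; rewrite size_map => lt_c.
rewrite !(nth_map [::]) ?(ltnW lt_c) // !nth_sorted_cols !size_sort; exact: size_colS.
Qed.

Lemma col_phi T c : col (phi T) c = sort geq (col T c).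
Proof. by rewrite phiE col_transpose ?nth_sorted_cols ?sorted_cols_sorted. Qed.

Lemma phi_shaped T : partition_shaped (phi T).
Proof. by rewrite phiE transpose_shaped ?sorted_cols_sorted. Qed.

Lemma ltn_size_phi T r c : (c < size (nth [::] (phi T) r)) = (r < size (col T c)).
Proof. by case/andP: (phi_shaped T) => _ ?; rewrite -ltn_size_col // col_phi size_sort. Qed.

Lemma nth_phi T r c : c < size (nth [::] (phi T) r) ->
  nth 0 (nth [::] (phi T) r) c = nth 0 (sort geq (col T c)) r.
Proof.
case/andP: (phi_shaped T) => _ ? lt_c.
by rewrite -col_phi nth_col // ltn_size_col.
Qed.

(** * Dominance *)

Definition dominated (B A : seq nat) := forall t, count (leq t) B <= count (leq t) A.

Lemma dominated_sort B A i : dominated B A -> i < size B ->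
  nth 0 (sort geq B) i <= nth 0 (sort geq A) i.
Proof.
move=> BA lt_i; have sorted_sort s := sort_sorted geq_total s.
set t := nth 0 (sort geq B) i; have : i < count (leq t) (sort geq A).
  rewrite count_sort; apply: leq_trans (BA t); rewrite -(count_sort geq (leq t) B).
  by rewrite (sorted_geq_count _ _ (sorted_sort B)) size_sort lt_i /t leqnn.
by rewrite (sorted_geq_count _ _ (sorted_sort A)) => /andP[].
Qed.

Lemma dominated_col T c : {in T, forall r, sorted geq r} -> dominated (col T c.+1) (col T c).
Proof.
elim: T => [|r T IHT] rows_sorted t //=; rewrite !col_cons.
have r_sorted := rows_sorted r (mem_head r T).
have {}IHT := IHT (fun q qT => rows_sorted q (mem_behead (s := r :: T) qT)) t.
case: (ltnP c.+1 (size r)) => [lt_c|le_c].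
  rewrite (ltnW lt_c) /= leq_add //.
  case: (leqP t (nth 0 r c.+1)) => // le_t.
  by rewrite (leq_trans le_t (sorted_geq_nth r_sorted (leqnSn c) lt_c)).
by case: ifP => _ //=; apply: leq_trans IHT (leq_addl _ _).
Qed.

Lemma dominated_rem A B x y : x \in A -> y \in B -> y <= x ->
  {in A, forall z, y <= z -> x <= z} -> dominated B A -> dominated (rem y B) (rem x A).
Proof.
move=> xA yB le_yx x_min BA t; rewrite !count_rem xA yB /=.
have [le_ty|lt_yt] := leqP t y; first by rewrite (leq_trans le_ty le_yx) leq_sub2r.
have [le_tx|_] := leqP t x; last by rewrite !subn0.
have countA : count (leq t) A = count (leq y) A.
  apply: eq_in_count => z zA /=; apply/idP/idP => [/(leq_trans (ltnW lt_yt))//|].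
  by move=> /(x_min z zA); apply: leq_trans.
have := sub_count (fun z (le_tz : t <= z) => leq_trans (ltnW lt_yt) le_tz) (rem y B).
rewrite !count_rem yB /= leqnn (leqNgt t y) lt_yt subn0 countA => /leq_trans; apply.
exact: leq_sub2r (BA y).
Qed.

Lemma revSSYT_col_sorted V c : revSSYT V -> sorted gtn (col V c).
Proof.
case=> _ V_sorted _ _ col_strict; apply/(sortedP 0) => i lt_i.
rewrite !nth_col //; last exact: ltn_trans lt_i.
by apply: col_strict; rewrite -ltn_size_col.
Qed.

Lemma revSSYT_col_uniq V c : revSSYT V -> uniq (col V c).
Proof.
move=> V_rev; apply: (sorted_uniq _ _ (revSSYT_col_sorted c V_rev)) => [|n].
  exact: rev_trans ltn_trans.
exact: ltnn.
Qed.

Lemma revSSYT_phi T : {in T, forall r, sorted geq r} ->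
  (forall c, uniq (col T c)) -> (forall c, all (fun x => 0 < x) (col T c)) ->
  revSSYT (phi T).
Proof.
move=> rows_sorted cols_uniq cols_pos; case/andP: (phi_shaped T) => nonempty sizes_sorted.
split=> // [||i c lt_c].
- apply/allP => _ /(nthP [::]) [r _ <-]; apply/allP => _ /(nthP 0) [c lt_c <-].
  rewrite nth_phi //; apply: (allP (cols_pos c)); rewrite -(mem_sort geq) mem_nth //.
  by rewrite size_sort -ltn_size_phi.
- apply/allP => _ /(nthP [::]) [r _ <-]; apply/(sortedP 0) => c lt_c.
  rewrite !nth_phi ?(ltnW lt_c) //; apply: dominated_sort; first exact: dominated_col.
  by rewrite -ltn_size_phi.
have lt_c' : c < size (nth [::] (phi T) i).
  by rewrite ltn_size_phi; apply: ltn_trans (ltnSn i) _; rewrite -ltn_size_phi.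
rewrite !nth_phi //; apply: sorted_geq_uniq_nth; rewrite ?sort_uniq ?(sort_sorted geq_total) //.
by rewrite size_sort -ltn_size_phi.
Qed.

Lemma phi_eq_revSSYT F V : revSSYT V -> (forall c, perm_eq (col F c) (col V c)) -> phi F = V.
Proof.
move=> V_rev eq_cols; apply: eq_from_col => [||c]; first exact: phi_shaped.
  by case: V_rev => nonempty sizes_sorted _ _ _; apply/andP.
rewrite col_phi; have /(perm_sortP geq_total geq_trans geq_anti) -> := eq_cols c.
rewrite sorted_sort //; first exact: geq_trans.
by apply: sub_sorted (revSSYT_col_sorted c V_rev) => m n /ltnW.
Qed.

(** * Greedy chains *)

(* [a] lists the entries y_1, ..., y_k chosen by [pick_chain] in the column sets
   [cs] = C_1, ..., C_k; the lower bound [b] for y_k appears as the default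
   value [nth b a k]. *)
Definition greedy_row (b : nat) (a : seq nat) (cs : seq (seq nat)) : Prop :=
  size a = size cs /\ forall c, c < size cs ->
  [/\ nth 0 a c \in nth [::] cs c, nth b a c.+1 <= nth 0 a c &
      {in nth [::] cs c, forall x, nth b a c.+1 <= x -> nth 0 a c <= x}].

Lemma ominP s y : omin s = Some y <-> y \in s /\ {in s, forall x, y <= x}.
Proof.
have min_mem z s' : foldr minn z s' \in z :: s'.
  elim: s' => [|w s' IH] /=; first exact: mem_head.
  rewrite /minn; case: ifP => _; first by rewrite !inE eqxx orbT.
  by move: IH; rewrite !inE => /orP[] ->; rewrite ?orbT.
have min_leq z s' x : x \in z :: s' -> foldr minn z s' <= x.
  elim: s' x => [|w s' IH] x /=; first by rewrite inE => /eqP->.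
  rewrite !inE geq_min => /or3P[xz|/eqP->|xs']; last 2 first.
  - by rewrite leqnn.
  - by rewrite IH ?orbT // inE xs' orbT.
  by rewrite IH ?orbT // inE xz.
case: s => [|z s] /=; first by split=> [|[]].
split=> [[<-]|[ys y_min]]; first by split=> [|x]; [apply: min_mem | apply: min_leq].
by congr Some; apply/anti_leq; rewrite min_leq // y_min // min_mem.
Qed.

Lemma omin_None s : (omin s == None) = (s == [::]).
Proof. by case: s. Qed.

Lemma omin_filterP b C y : omin [seq x <- C | b <= x] = Some y <->
  [/\ y \in C, b <= y & {in C, forall x, b <= x -> y <= x}].
Proof.
split=> [/ominP[]|[yC le_by y_min]].
  rewrite mem_filter => /andP[le_by yC] y_min; split=> // x xC le_bx.
  by apply: y_min; rewrite mem_filter le_bx.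
apply/ominP; rewrite mem_filter le_by yC; split=> // x.
by rewrite mem_filter => /andP[le_bx xC]; apply: y_min.
Qed.

Lemma pick_chain_cons b C rcs ys : pick_chain b (C :: rcs) = Some ys <->
  exists2 y, [/\ y \in C, b <= y & {in C, forall x, b <= x -> y <= x}] &
    exists2 ys', pick_chain y rcs = Some ys' & ys = y :: ys'.
Proof.
rewrite /=; split=> [|[y /omin_filterP -> [ys' -> ->]] //].
case E: omin => [y|] //; case E': pick_chain => [ys'|] // [<-].
by exists y; [apply/omin_filterP | exists ys'].
Qed.

Lemma greedy_row_rcons b a y cs C : greedy_row b (rcons a y) (rcons cs C) <->
  greedy_row y a cs /\ [/\ y \in C, b <= y & {in C, forall x, b <= x -> y <= x}].
Proof.
rewrite /greedy_row !size_rcons.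
have [eq_size|neq_size] := eqVneq (size a) (size cs); last first.
  by split=> [[[/eqP]]|[[/eqP]]]; rewrite (negbTE neq_size).
have nth_a c : c < size cs -> nth 0 (rcons a y) c = nth 0 a c.
  by rewrite nth_rcons eq_size => ->.
have nth_aS c : c < size cs -> nth b (rcons a y) c.+1 = nth y a c.+1.
  rewrite nth_rcons eq_size -ltnS ltnS leq_eqVlt => /orP[/eqP->|lt_c]; last first.
    by rewrite lt_c (set_nth_default y) ?eq_size.
  by rewrite ltnn eqxx nth_default ?eq_size.
have nth_cs c : c < size cs -> nth [::] (rcons cs C) c = nth [::] cs c.
  by rewrite nth_rcons => ->.
have nth_last : nth 0 (rcons a y) (size cs) = y by rewrite nth_rcons eq_size ltnn eqxx.
have nth_lastS : nth b (rcons a y) (size cs).+1 = b.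
  by rewrite nth_default // size_rcons eq_size.
have nth_Clast : nth [::] (rcons cs C) (size cs) = C by rewrite nth_rcons ltnn eqxx.
split=> [[_ row_ok]|[[_ row_ok] last_ok]].
  split; last by have := row_ok _ (ltnSn _); rewrite nth_last nth_lastS nth_Clast.
  by split=> // c lt_c; have := row_ok c (ltnW lt_c); rewrite nth_a ?nth_aS ?nth_cs.
split=> [|c]; first by rewrite eq_size.
rewrite ltnS leq_eqVlt => /orP[/eqP->|lt_c].
  by rewrite nth_last nth_lastS nth_Clast.
by rewrite nth_a ?nth_aS ?nth_cs //; apply: row_ok.
Qed.

Lemma pick_chain_greedy b cs ys :
  pick_chain b (rev cs) = Some ys <-> greedy_row b (rev ys) cs.
Proof.
elim/last_ind: cs b ys => [|cs C IHcs] b ys.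
  split=> [[<-]|[]] //; rewrite size_rev /=.
  by case: ys.
rewrite rev_rcons; split.
  case/pick_chain_cons=> y y_ok [ys' /IHcs ys'_greedy ->].
  by rewrite rev_cons; apply/greedy_row_rcons.
case: ys => [|y ys]; first by case; rewrite size_rcons.
rewrite rev_cons => /greedy_row_rcons [/IHcs ys_pick y_ok].
by apply/pick_chain_cons; exists y => //; exists ys.
Qed.

Lemma count_leq0 s : count (leq 0) s = size s.
Proof. exact: count_predT. Qed.

Lemma pick_chain_exists b cs :
  (forall c, dominated (nth [::] cs c.+1) (nth [::] cs c)) ->
  cs != [::] -> has (leq b) (last [::] cs) ->
  exists ys, pick_chain b (rev cs) = Some ys.
Proof.
elim/last_ind: cs b => [|cs C IHcs] b cs_dom // _; rewrite last_rcons => /hasP[x xC le_bx].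
case E: (omin [seq x <- C | b <= x]) => [y|]; last first.
  have : x \in [seq x <- C | b <= x] by rewrite mem_filter le_bx.
  by move/eqP: E; rewrite omin_None => /eqP ->.
have [yC _ _] := (omin_filterP b C y).1 E.
have [->|cs_cons] := eqVneq cs [::]; first by exists [:: y]; rewrite /= E.
(* C_k is dominated by C_(k-1), so C_(k-1) still has an entry >= y_k. *)
have [ys pick] : exists ys, pick_chain y (rev cs) = Some ys.
  apply: IHcs => // [c t|].
    case: (ltnP c.+1 (size cs)) => [lt_c|le_c]; last by rewrite (nth_default _ le_c).
    by have := cs_dom c t; rewrite !nth_rcons lt_c (ltnW lt_c).
  have := cs_dom (size cs).-1 y; rewrite prednK ?lt0n ?size_eq0 //.
  rewrite !nth_rcons ltnn eqxx -(prednK (n := size cs)) ?lt0n ?size_eq0 // ltnSn.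
  rewrite -nth_last has_count; apply: leq_trans; rewrite -has_count.
  by apply/hasP; exists y.
by exists (y :: ys); rewrite rev_rcons /= E pick.
Qed.

(** * Rows of a quasi-key tableau *)

(* Conditions (2)-(4) of a quasi-key tableau between a row [r] and a higher row [s]. *)
Definition key_pair (r s : seq nat) : Prop :=
  [/\ forall c, c < size r -> c < size s -> nth 0 r c != nth 0 s c,
      forall c, c < size r -> c < size s -> nth 0 s c < nth 0 r c ->
        c.+1 < size r /\ nth 0 s c < nth 0 r c.+1
    & size r < size s -> forall c, c < size r -> c.+1 < size s ->
        nth 0 r c < nth 0 s c.+1].

(* The nonempty rows of a filling in qKT^(1), the row of index i being the one
   whose first entry is i. *)
Definition key_rows (R : seq (seq nat)) : Prop :=
  [/\ forall r, r \in R -> [/\ r != [::], sorted geq r & all (fun x => 0 < x) r],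
      uniq (map (head 0) R)
    & forall r s, r \in R -> s \in R -> head 0 r < head 0 s -> key_pair r s].

Section GreedyRowKeyPair.

Variables (a r : seq nat) (cs : seq (seq nat)).
Hypotheses (a_greedy : greedy_row 0 a cs) (r_sorted : sorted geq r).
Hypothesis r_short : size r <= size cs.
Hypothesis r_cols : forall c, c < size r ->
  nth 0 r c \in nth [::] cs c /\ nth 0 r c != nth 0 a c.

Lemma greedy_row_dichotomy c : c < size r ->
  nth 0 r c < nth 0 a c.+1 \/ nth 0 a c < nth 0 r c.
Proof.
move=> lt_c; have [r_c ne_c] := r_cols lt_c.
case: (ltnP (nth 0 r c) (nth 0 a c.+1)) => [|le_c]; [by left | right].
have [_ _ a_min] := a_greedy.2 c (leq_trans lt_c r_short).
by rewrite ltn_neqAle eq_sym ne_c a_min.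
Qed.

Lemma greedy_row_key_pair_below : key_pair a r.
Proof.
have [eq_size _] := a_greedy.
split=> [c _ lt_c|c lt_ca lt_c lt_ra|lt_ar]; last by move: r_short; rewrite -eq_size leqNgt lt_ar.
  by rewrite eq_sym; case: (r_cols lt_c).
have [lt_rc|lt_ar] := greedy_row_dichotomy lt_c; last by move: lt_ra; rewrite ltnNge ltnW.
split=> //; case: (ltnP c.+1 (size a)) => // le_a.
by move: lt_rc; rewrite (nth_default 0 le_a).
Qed.

Lemma greedy_row_key_pair_above : head 0 r < head 0 a -> key_pair r a.
Proof.
move=> lt_head.
have r_below c : c < size r -> nth 0 r c < nth 0 a c.
  elim: c => [|c IHc] lt_c; first by rewrite !nth0.
  have [r_c _] := r_cols (ltnW lt_c).
  have lt_rc := IHc (ltnW lt_c); have le_r := sorted_geq_nth r_sorted (leqnSn c) lt_c.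
  case: (ltnP (nth 0 r c.+1) (nth 0 a c.+1)) => // le_ar.
  have [_ _ a_min] := a_greedy.2 c (leq_trans (ltnW lt_c) r_short).
  by move: lt_rc; rewrite ltnNge a_min // (leq_trans le_ar le_r).
split=> [c lt_c _|c lt_c _ lt_ar|_ c lt_c _].
- by rewrite neq_ltn r_below.
- by move: lt_ar; rewrite ltnNge ltnW ?r_below.
have [//|lt_ar] := greedy_row_dichotomy lt_c.
by move: lt_ar; rewrite ltnNge ltnW ?r_below.
Qed.

End GreedyRowKeyPair.

Lemma key_rows_sub R R' : key_rows R -> {subset R' <= R} -> uniq (map (head 0) R') ->
  key_rows R'.
Proof.
case=> rows_ok _ pairs_ok sub_R' uniq_R'.
by split=> // [r /sub_R'|r s /sub_R' + /sub_R']; auto.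
Qed.

Lemma key_rows_nonempty R : key_rows R -> all (fun r => r != [::]) R.
Proof. by case=> rows_ok _ _; apply/allP => r /rows_ok []. Qed.

Lemma key_rows_head_pos R r : key_rows R -> r \in R -> 0 < head 0 r.
Proof. by case=> rows_ok _ _ /rows_ok [+ _]; case: r => // x r _ /andP[]. Qed.

Lemma exists_longest_lowest (R : seq (seq nat)) : R != [::] ->
  exists2 p, p \in R & {in R, forall q, size q <= size p} /\
    {in R, forall q, size q = size p -> head 0 p <= head 0 q}.
Proof.
move=> R_cons.
have ex_size : exists m, has (fun q => size q == m) R.
  by case: R R_cons => // q R _; exists (size q); rewrite /= eqxx.
have size_bound m : has (fun q => size q == m) R -> m <= foldr maxn 0 (map size R).
  by case/hasP=> q qR /eqP <-; apply/leq_foldr_maxn/map_f.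
case: (ex_maxnP ex_size size_bound) => m /hasP[q qR /eqP size_q] m_max.
have ex_head : exists h, has (fun q => (size q == m) && (head 0 q == h)) R.
  by exists (head 0 q); apply/hasP; exists q; rewrite ?size_q ?eqxx.
case: (ex_minnP ex_head) => h /hasP[p pR /andP[/eqP size_p /eqP head_p]] h_min.
exists p => //; split=> q' q'R; first by rewrite size_p; apply: m_max; apply/hasP; exists q'.
by rewrite size_p head_p => size_q'; apply: h_min; apply/hasP; exists q'; rewrite ?size_q' ?eqxx.
Qed.

Section LongestLowestRow.

Variables (R : seq (seq nat)) (p : seq nat).
Hypotheses (R_key : key_rows R) (pR : p \in R).
Hypothesis p_longest : {in R, forall q, size q <= size p}.
Hypothesis p_lowest : {in R, forall q, size q = size p -> head 0 p <= head 0 q}.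

Lemma longest_lowest_min c : c < size p ->
  {in col R c, forall x, nth 0 p c.+1 <= x -> nth 0 p c <= x}.
Proof.
case: R_key => _ uniq_heads pairs_ok lt_c _ /colP[q qR [lt_cq ->]] le_pq.
have [->//|neq_qp] := eqVneq q p.
have neq_head : head 0 q != head 0 p.
  by apply: contraNneq neq_qp => /(uniq_map_inj uniq_heads qR pR) ->.
case: (ltnP (nth 0 q c) (nth 0 p c)) => // lt_qp.
case: (ltngtP (head 0 p) (head 0 q)) => [lt_head|lt_head|eq_head].
- have [_ key3 _] := pairs_ok p q pR qR lt_head.
  by have [_] := key3 c lt_c lt_cq lt_qp; rewrite ltnNge le_pq.
- have [_ _ key4] := pairs_ok q p qR pR lt_head.
  have lt_size : size q < size p.
    rewrite ltn_neqAle p_longest // andbT; apply: contraTneq lt_head => eq_size.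
    by rewrite -leqNgt p_lowest.
  by have := key4 lt_size c lt_cq (leq_ltn_trans lt_cq lt_size); rewrite ltnNge le_pq.
- by rewrite eq_head eqxx in neq_head.
Qed.

Lemma longest_lowest_greedy cs : (forall c, perm_eq (nth [::] cs c) (col R c)) ->
  last [::] cs != [::] -> greedy_row 0 p cs.
Proof.
case: R_key => rows_ok _ _ cs_cols last_cs.
have [p_cons p_sorted _] := rows_ok p pR.
have size_p_gt0 : 0 < size p by rewrite lt0n size_eq0.
have size_p : size p = size cs.
  apply/anti_leq/andP; split.
    rewrite -(prednK size_p_gt0); apply: (@mem_nth_size _ _ _ (nth 0 p (size p).-1)).
    by rewrite (perm_mem (cs_cols _)) mem_col // prednK.
  have cs_cons : 0 < size cs by case: (cs) last_cs.
  move: last_cs; rewrite -nth_last -size_eq0 (perm_size (cs_cols _)) size_col -lt0n -has_count.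
  case/hasP=> q qR /= lt_q; rewrite -(prednK cs_cons); exact: leq_trans lt_q (p_longest qR).
split=> // c lt_c; split.
- by rewrite (perm_mem (cs_cols c)) mem_col // size_p.
- case: (ltnP c.+1 (size p)) => [lt_cp|le_p]; first exact: sorted_geq_nth.
  by rewrite nth_default.
by move=> x; rewrite (perm_mem (cs_cols c)); apply: longest_lowest_min; rewrite size_p.
Qed.

End LongestLowestRow.

Lemma col_rem_longest R p c : p \in R -> {in R, forall q, size q <= size p} ->
  perm_eq (col (rem p R) c) (rem (nth 0 p c) (col R c)).
Proof.
move=> pR p_longest; case: (ltnP c (size p)) => [lt_c|le_p].
  have := perm_rem (nth 0 p c) (perm_col c (perm_to_rem pR)).
  by rewrite col_cons lt_c /= eqxx perm_sym.
have short q : q \in R -> size q <= c by move=> qR; apply: leq_trans (p_longest _ qR) le_p.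
by rewrite !col_nil // => q /mem_rem; apply: short.
Qed.

Lemma key_rows_rem R p : key_rows R -> key_rows (rem p R).
Proof.
move=> R_key; have [_ uniq_heads _] := R_key.
apply: (key_rows_sub R_key) => [q /mem_rem //|].
by apply: subseq_uniq uniq_heads; apply/map_subseq/rem_subseq.
Qed.

(** * The row-filling algorithm *)

Lemma nth_trim cols c : nth [::] (trim cols) c = nth [::] cols c.
Proof.
elim: cols c => [|C cols IHcols] c //=.
case: ifP => [/andP[/eqP trim_nil /eqP ->]|_]; last by case: c.
by case: c => [|c] //=; rewrite -IHcols trim_nil nth_nil.
Qed.

Lemma last_trim cols : trim cols != [::] -> last [::] (trim cols) != [::].
Proof.
elim: cols => [|C cols IHcols] //=; case: ifP => //.
case: (trim cols) IHcols => [|C' cols'] IH /=; first by move=> /negbT.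
by move=> _ _; apply: IH.
Qed.

Definition strip_row (a : seq nat) (cs : seq (seq nat)) : seq (seq nat) :=
  [seq rem p.1 p.2 | p <- zip a cs].

Lemma nth_strip_row a cs c : size a = size cs ->
  nth [::] (strip_row a cs) c = rem (nth 0 a c) (nth [::] cs c).
Proof.
move=> eq_size; case: (ltnP c (size cs)) => [lt_c|le_c].
  by rewrite (nth_map (0, [::])) ?nth_zip // size_zip eq_size minnn.
by rewrite !nth_default ?size_map ?size_zip ?eq_size ?minnn.
Qed.

Lemma psi_rows_trim_nil n cols : trim cols = [::] -> psi_rows n cols = Some [::].
Proof. by case: n => [|n] /= ->. Qed.

Lemma psi_rowsS n cols ys : trim cols != [::] -> pick_chain 0 (rev (trim cols)) = Some ys ->
  psi_rows n.+1 cols = omap (cons (rev ys)) (psi_rows n (strip_row (rev ys) (trim cols))).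
Proof.
rewrite /=; case: (trim cols) => // C cs _ pick; rewrite pick.
by case: psi_rows.
Qed.

(* The properties of the column sets of a reverse SSYT on which [psi_rows] relies. *)
Definition admissible (cols : seq (seq nat)) := forall c,
  [/\ uniq (nth [::] cols c), all (fun x => 0 < x) (nth [::] cols c)
    & dominated (nth [::] cols c.+1) (nth [::] cols c)].

Lemma admissible_trim cols : admissible cols -> admissible (trim cols).
Proof. by move=> cols_adm c; rewrite !nth_trim. Qed.

Lemma admissible_col0 cols : admissible cols -> trim cols != [::] -> nth [::] cols 0 != [::].
Proof.
move=> cols_adm trim_cons.
have size_dec : {homo (fun c => size (nth [::] cols c)) : c d / c <= d >-> d <= c}.
  apply: homo_leq => [c|c d e|c] /=; [exact: leqnn | by move=> ? /leq_trans; apply |].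
  by have [_ _ /(_ 0)] := cols_adm c; rewrite !count_leq0.
rewrite -size_eq0 -lt0n (leq_trans _ (size_dec 0 (size (trim cols)).-1 (leq0n _))) //.
by rewrite lt0n size_eq0 -nth_trim nth_last last_trim.
Qed.

Lemma admissible_strip cs a : admissible cs -> greedy_row 0 a cs ->
  admissible (strip_row a cs).
Proof.
move=> cs_adm [size_a a_ok] c; rewrite !nth_strip_row //.
have [cs_uniq cs_pos cs_dom] := cs_adm c; split.
- exact: rem_uniq.
- by apply/allP => x /mem_rem /(allP cs_pos).
case: (ltnP c.+1 (size cs)) => [lt_c|le_c]; last by rewrite (nth_default _ le_c).
have [a_mem a_dec a_min] := a_ok c (ltnW lt_c); have [aS_mem _ _] := a_ok c.+1 lt_c.
exact: dominated_rem a_mem aS_mem a_dec a_min cs_dom.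
Qed.

Lemma key_rows_greedy_cons a cs R : admissible cs -> greedy_row 0 a cs -> cs != [::] ->
  key_rows R -> (forall c, perm_eq (col R c) (nth [::] (strip_row a cs) c)) ->
  key_rows (a :: R).
Proof.
move=> cs_adm a_greedy cs_cons [rows_ok uniq_heads pairs_ok] R_cols.
have [size_a a_ok] := a_greedy.
have R_entries q c : q \in R -> c < size q ->
    nth 0 q c \in nth [::] cs c /\ nth 0 q c != nth 0 a c.
  move=> qR lt_c; have [cs_uniq _ _] := cs_adm c.
  have := mem_col qR lt_c; rewrite (perm_mem (R_cols c)) nth_strip_row //.
  by rewrite (mem_rem_uniq _ cs_uniq) inE => /andP[].
have R_short q : q \in R -> size q <= size cs.
  move=> qR; have [q_cons _ _] := rows_ok q qR; have size_q : 0 < size q by rewrite lt0n size_eq0.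
  have lt_last : (size q).-1 < size q by rewrite prednK.
  by have [/mem_nth_size] := R_entries q _ qR lt_last; rewrite prednK.
split.
- move=> r; rewrite inE => /predU1P[->|/rows_ok //].
  split; first by rewrite -size_eq0 size_a size_eq0.
    by apply/(sortedP 0) => c; rewrite size_a => /ltnW /a_ok [].
  apply/allP => _ /(nthP 0) [c lt_c <-]; rewrite size_a in lt_c.
  have [_ /allP cs_pos _] := cs_adm c; apply: cs_pos.
  by case: (a_ok c lt_c).
- rewrite /= uniq_heads andbT; apply/mapP => -[q qR head_q].
  have [q_cons _ _] := rows_ok q qR; have size_q : 0 < size q by rewrite lt0n size_eq0.
  by have [_] := R_entries q 0 qR size_q; rewrite !nth0 head_q eqxx.
move=> r s; rewrite !inE => /predU1P[->|rR] /predU1P[->|sR]; first by rewrite ltnn.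
- by move=> _; apply: greedy_row_key_pair_below a_greedy (R_short s sR) (R_entries s ^~ sR).
- have [_ r_sorted _] := rows_ok r rR.
  exact: greedy_row_key_pair_above a_greedy r_sorted (R_short r rR) (R_entries r ^~ rR).
exact: pairs_ok.
Qed.

Lemma perm_col_cons_strip a cs R c : greedy_row 0 a cs ->
  perm_eq (col R c) (nth [::] (strip_row a cs) c) -> perm_eq (col (a :: R) c) (nth [::] cs c).
Proof.
move=> [size_a a_ok]; rewrite col_cons size_a nth_strip_row //.
case: ltnP => [lt_c|le_c]; last by rewrite (nth_default [::] le_c); apply.
rewrite -(perm_cons (nth 0 a c)) => /perm_trans; apply.
by rewrite perm_sym perm_to_rem //; case: (a_ok c lt_c).
Qed.

Lemma psi_rows_admissible n cols : admissible cols -> size (nth [::] cols 0) <= n ->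
  exists2 R, psi_rows n cols = Some R &
    key_rows R /\ forall c, perm_eq (col R c) (nth [::] cols c).
Proof.
elim: n cols => [|n IHn] cols cols_adm le_n.
all: have [trim_nil|trim_cons] := eqVneq (trim cols) [::].
1,3: by exists [::]; [rewrite psi_rows_trim_nil | split=> // c; rewrite -nth_trim trim_nil nth_nil].
  by move: le_n; rewrite leqn0 size_eq0 (negbTE (admissible_col0 cols_adm trim_cons)).
set cs := trim cols; have cs_adm := admissible_trim cols_adm.
have cs_gt0 : 0 < size cs by rewrite lt0n size_eq0.
have [ys pick] : exists ys, pick_chain 0 (rev cs) = Some ys.
  apply: pick_chain_exists => // [c|]; first by case: (cs_adm c).
  by rewrite has_count count_leq0 lt0n size_eq0 last_trim.
have a_greedy := (pick_chain_greedy 0 cs ys).1 pick.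
have [a_mem0 _ _] := a_greedy.2 0 cs_gt0.
have le_strip : size (nth [::] (strip_row (rev ys) cs) 0) <= n.
  by rewrite nth_strip_row ?a_greedy.1 // size_rem // nth_trim; case: (size _) le_n.
have [R psi_R [R_key R_cols]] := IHn _ (admissible_strip cs_adm a_greedy) le_strip.
exists (rev ys :: R); first by rewrite (psi_rowsS n trim_cons pick) -/cs psi_R.
split; first exact: (key_rows_greedy_cons cs_adm a_greedy trim_cons R_key R_cols).
by move=> c; rewrite -nth_trim; apply: perm_col_cons_strip.
Qed.

Lemma trim_nil_key_rows cols R : key_rows R ->
  (forall c, perm_eq (nth [::] cols c) (col R c)) -> (trim cols == [::]) = (R == [::]).
Proof.
move=> R_key R_cols; apply/eqP/eqP => [trim_nil|R_nil].
  have := perm_size (R_cols 0); rewrite -nth_trim trim_nil size_col0 ?key_rows_nonempty //.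
  by case: (R).
apply/eqP; apply: contraT => /last_trim.
by rewrite -nth_last nth_trim -size_eq0 (perm_size (R_cols _)) R_nil.
Qed.

Lemma psi_rows_key_rows n cols R : key_rows R ->
  (forall c, perm_eq (nth [::] cols c) (col R c)) -> size R <= n ->
  exists2 R', psi_rows n cols = Some R' & perm_eq R' R.
Proof.
elim: n cols R => [|n IHn] cols R R_key R_cols le_n.
all: have R_nil := trim_nil_key_rows R_key R_cols.
all: have [trim_nil|trim_cons] := eqVneq (trim cols) [::].
1,3: exists [::]; rewrite ?psi_rows_trim_nil //.
1,2: by move: R_nil; rewrite trim_nil eqxx => /esym/eqP->.
all: have R_cons : R != [::] by rewrite -R_nil.
  by move: le_n; rewrite leqn0 size_eq0 (negbTE R_cons).
set cs := trim cols.
have cs_cols c : perm_eq (nth [::] cs c) (col R c) by rewrite nth_trim.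
have [p pR [p_longest p_lowest]] := exists_longest_lowest R_cons.
have p_greedy := longest_lowest_greedy R_key pR p_longest p_lowest cs_cols (last_trim trim_cons).
have pick : pick_chain 0 (rev cs) = Some (rev p) by apply/pick_chain_greedy; rewrite revK.
have strip_cols c : perm_eq (nth [::] (strip_row p cs) c) (col (rem p R) c).
  rewrite nth_strip_row ?p_greedy.1 // perm_sym (perm_trans (col_rem_longest c pR p_longest)) //.
  by rewrite perm_rem // perm_sym.
have le_rem : size (rem p R) <= n by rewrite size_rem //; case: (size R) le_n.
have [R' psi_R' perm_R'] := IHn _ _ (key_rows_rem p R_key) strip_cols le_rem.
exists (p :: R'); first by rewrite (psi_rowsS n trim_cons pick) revK -/cs psi_R'.
rewrite perm_sym; apply: perm_trans (perm_to_rem pR) _.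
by rewrite perm_cons perm_sym.
Qed.

Definition row_of (R : seq (seq nat)) (i : nat) : seq nat :=
  nth [::] R (find (fun r => head 0 r == i) R).

Lemma row_ofP R i : has (fun r => head 0 r == i) R ->
  row_of R i \in R /\ head 0 (row_of R i) = i.
Proof.
move=> has_i; split; first by rewrite /row_of mem_nth // -has_find.
exact/eqP/(nth_find [::] has_i).
Qed.

Lemma row_of_nil R i : ~~ has (fun r => head 0 r == i) R -> row_of R i = [::].
Proof. by move=> no_i; rewrite /row_of nth_default // leqNgt -has_find. Qed.

Lemma row_of_neq_nil R i : row_of R i != [::] -> has (fun r => head 0 r == i) R.
Proof. by apply: contraNT => /row_of_nil ->. Qed.

Lemma row_of_head R r : uniq (map (head 0) R) -> r \in R -> row_of R (head 0 r) = r.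
Proof.
move=> uniq_heads rR; have [|rowR head_row] := row_ofP (R := R) (i := head 0 r).
  by apply/hasP; exists r.
exact: (uniq_map_inj uniq_heads rowR rR).
Qed.

Lemma size_place_rows R : size (place_rows R) = foldr maxn 0 (map (head 0) R).
Proof. exact: size_mkseq. Qed.

Lemma frow_place_rows R i : 0 < i -> frow (place_rows R) i = row_of R i.
Proof.
move=> i_gt0; rewrite /frow; case: (ltnP i.-1 (size (place_rows R))) => [lt_i|le_i].
  by rewrite nth_mkseq -?size_place_rows // prednK.
rewrite nth_default // row_of_nil //; apply/hasP => -[r rR /eqP head_r].
move: le_i; rewrite size_place_rows -ltnS prednK // leqNgt ltnS -head_r.
by rewrite leq_foldr_maxn // map_f.
Qed.

Section PlaceRows.

Variable R : seq (seq nat).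
Hypothesis R_key : key_rows R.

Lemma fcell_place_rows i c : fcell (place_rows R) i c ->
  [/\ 0 < i, 0 < c, c.-1 < size (row_of R i), row_of R i \in R
     & head 0 (row_of R i) = i].
Proof.
case/andP=> /andP[i_gt0 _] /andP[c_gt0]; rewrite frow_place_rows // => le_c.
rewrite prednK //; case: (boolP (has (fun r => head 0 r == i) R)).
  by case/row_ofP.
move=> /row_of_nil row_nil.
by move: le_c; rewrite row_nil leqNgt c_gt0.
Qed.

Lemma fent_place_rows i c : 0 < i -> fent (place_rows R) i c = nth 0 (row_of R i) c.-1.
Proof. by move=> i_gt0; rewrite /fent frow_place_rows. Qed.

Lemma place_rows_key_pair i j c d : fcell (place_rows R) i c -> fcell (place_rows R) j d ->
  i < j -> key_pair (row_of R i) (row_of R j).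
Proof.
case: R_key => _ _ pairs_ok /fcell_place_rows[_ _ _ rR head_r] /fcell_place_rows[_ _ _ sR head_s].
by move=> lt_ij; apply: pairs_ok; rewrite ?head_r ?head_s.
Qed.

Lemma row_of_sorted i : sorted geq (row_of R i).
Proof.
have [rows_ok _ _] := R_key.
by case: (boolP (has (fun r => head 0 r == i) R)) => [/row_ofP[/rows_ok[]]|/row_of_nil ->].
Qed.

Lemma place_rows_qKT : qKT (place_rows R).
Proof.
have [rows_ok _ _] := R_key.
split; [|split; [|split; [|split; [|split]]]].
- move=> i c /fcell_place_rows[i_gt0 _ lt_c rR head_r]; rewrite fent_place_rows //.
  have [_ r_sorted r_pos] := rows_ok _ rR; have x_in := mem_nth 0 lt_c.
  by rewrite (allP r_pos _ x_in) -{2}head_r sorted_geq_head.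
- move=> i; have -> : frow (place_rows R) i = frow (place_rows R) (maxn i 1) by case: i.
  by rewrite frow_place_rows ?leq_maxr ?row_of_sorted.
- move=> i j c cell_i cell_j neq_ij.
  have [i_gt0 _ lt_ci _ _] := fcell_place_rows cell_i.
  have [j_gt0 _ lt_cj _ _] := fcell_place_rows cell_j.
  rewrite !fent_place_rows //; case: (ltngtP i j) => [lt_ij|lt_ji|eq_ij].
  + by case: (place_rows_key_pair cell_i cell_j lt_ij) => /(_ _ lt_ci lt_cj).
  + by rewrite eq_sym; case: (place_rows_key_pair cell_j cell_i lt_ji) => /(_ _ lt_cj lt_ci).
  + by rewrite eq_ij eqxx in neq_ij.
- move=> i j lt_ij /fcell_place_rows[i_gt0 _ _ _ head_i] /fcell_place_rows[j_gt0 _ _ _ head_j].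
  by rewrite !fent_place_rows // !nth0 head_i head_j.
- move=> i j c lt_ij cell_i cell_j.
  have [i_gt0 c_gt0 lt_ci _ _] := fcell_place_rows cell_i.
  have [j_gt0 _ lt_cj _ _] := fcell_place_rows cell_j.
  have [_ key3 _] := place_rows_key_pair cell_i cell_j lt_ij.
  rewrite !fent_place_rows // => /(key3 _ lt_ci lt_cj); rewrite prednK // => -[lt_cS lt_next].
  by case/andP: cell_i => row_i _; rewrite /fcell row_i frow_place_rows //= lt_cS.
move=> i j c lt_ij lt_size cell_i cell_j.
have [i_gt0 c_gt0 lt_ci _ _] := fcell_place_rows cell_i.
have [j_gt0 _ lt_cj _ _] := fcell_place_rows cell_j.
rewrite !frow_place_rows // in lt_size.
have [_ _ key4] := place_rows_key_pair cell_i cell_j lt_ij.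
by rewrite !fent_place_rows //=; have := key4 lt_size _ lt_ci; rewrite prednK //; apply.
Qed.

Lemma last_place_rows : place_rows R = [::] \/ last [::] (place_rows R) <> [::].
Proof.
have [rows_ok _ _] := R_key.
have [F_nil|F_gt0] := posnP (size (place_rows R)); [left; exact: size0nil | right].
have has_last : has (fun r => head 0 r == size (place_rows R)) R.
  move: (F_gt0); rewrite {1 2}size_place_rows => /foldr_maxn_mem /mapP[r rR head_r].
  by apply/hasP; exists r; rewrite ?size_place_rows ?head_r.
have -> : last [::] (place_rows R) = frow (place_rows R) (size (place_rows R)).
  by rewrite /frow nth_last.
by rewrite frow_place_rows //; have [/rows_ok[/eqP]] := row_ofP has_last.
Qed.

Lemma place_rows_qKT1 : qKT1 (place_rows R).
Proof.
split; [exact: place_rows_qKT | split; first exact: last_place_rows].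
by move=> i /fcell_place_rows[i_gt0 _ _ _ head_i]; rewrite fent_place_rows // nth0.
Qed.

Lemma place_rows_nonempty : perm_eq [seq r <- place_rows R | r != [::]] R.
Proof.
have [rows_ok uniq_heads _] := R_key.
apply: uniq_perm; last 1 first.
- move=> r; rewrite mem_filter; apply/andP/idP => [[r_cons /mapP[i _ eq_r]]|rR].
    by move: r_cons; rewrite eq_r => /row_of_neq_nil/row_ofP[].
  have [r_cons _ _] := rows_ok r rR; have head_gt0 := key_rows_head_pos R_key rR.
  split=> //; rewrite -(row_of_head uniq_heads rR) -frow_place_rows //.
  by rewrite mem_nth // size_place_rows prednK // leq_foldr_maxn // map_f.
- apply: (@map_uniq _ _ (head 0)); rewrite /place_rows /mkseq filter_map -map_comp.
  set s := filter _ _; have -> : map (head 0 \o row_of R \o succn) s = map succn s.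
    by apply/eq_in_map => i; rewrite mem_filter /= => /andP[/row_of_neq_nil/row_ofP[]].
  by rewrite map_inj_uniq ?filter_uniq ?iota_uniq //; move=> ? ? [].
exact: map_uniq uniq_heads.
Qed.

Lemma perm_col_place_rows c : perm_eq (col (place_rows R) c) (col R c).
Proof. by rewrite -col_filter_nil; apply/perm_col/place_rows_nonempty. Qed.

End PlaceRows.

Lemma key_rows_col_uniq R c : key_rows R -> uniq (col R c).
Proof.
elim: R => [|r R IHR] // R_key.
have [rows_ok /andP[r_notin uniq_heads] pairs_ok] := R_key.
have R_key' : key_rows R by apply: key_rows_sub R_key _ uniq_heads => q qR; rewrite inE qR orbT.
rewrite col_cons; case: ifP => lt_c; last exact: IHR.
rewrite /= IHR // andbT; apply/negP => /colP[s sR [lt_cs eq_rs]].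
have r_in := mem_head r R; have s_in : s \in r :: R by rewrite inE sR orbT.
have neq_head : head 0 r != head 0 s by apply: contraNneq r_notin => ->; rewrite map_f.
case: (ltngtP (head 0 r) (head 0 s)) => [lt_rs|lt_sr|eq_head]; last first.
- by rewrite eq_head eqxx in neq_head.
- by case: (pairs_ok s r s_in r_in lt_sr) => /(_ c lt_cs lt_c); rewrite eq_rs eqxx.
by case: (pairs_ok r s r_in s_in lt_rs) => /(_ c lt_c lt_cs); rewrite eq_rs eqxx.
Qed.

Lemma fcellS T j c : fcell T j.+1 c.+1 = (j < size T) && (c < size (nth [::] T j)).
Proof. by []. Qed.

Lemma qKT1_head T j : qKT1 T -> nth [::] T j != [::] -> head 0 (nth [::] T j) = j.+1.
Proof.
move=> [_ [_ first_col]] row_cons; rewrite -nth0; apply: (first_col j.+1).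
rewrite fcellS lt0n size_eq0 row_cons andbT.
by apply: contraNT row_cons; rewrite -leqNgt => /(nth_default [::]) ->.
Qed.

Lemma mem_qKT1_rows T r : qKT1 T -> r \in [seq r <- T | r != [::]] ->
  exists2 j, r = nth [::] T j & [/\ j < size T, r != [::] & head 0 r = j.+1].
Proof.
move=> T_qKT1; rewrite mem_filter => /andP[r_cons /(nthP [::])[j lt_j eq_r]].
by exists j => //; rewrite -eq_r qKT1_head ?eq_r.
Qed.

Lemma qKT1_key_rows T : qKT1 T -> key_rows [seq r <- T | r != [::]].
Proof.
move=> T_qKT1; have [[T_pos [T_sorted [T_distinct [_ [T_key3 T_key4]]]]] _] := T_qKT1.
have rowP := mem_qKT1_rows T_qKT1.
split.
- move=> _ /rowP[j -> [lt_j r_cons _]]; split=> //; first exact: (T_sorted j.+1).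
  apply/allP => _ /(nthP 0)[c lt_c <-].
  by case/andP: (T_pos j.+1 c.+1 (introT andP (conj lt_j lt_c))).
- have -> : [seq r <- T | r != [::]] =
      map (nth [::] T) [seq j <- iota 0 (size T) | nth [::] T j != [::]].
    by rewrite -{1}(mkseq_nth [::] T) /mkseq filter_map.
  rewrite -map_comp; set s := filter _ _.
  have -> : map (head 0 \o nth [::] T) s = map succn s.
    by apply/eq_in_map => j; rewrite mem_filter => /andP[row_cons _] /=; apply: qKT1_head.
  by rewrite map_inj_uniq ?filter_uniq ?iota_uniq //; move=> ? ? [].
move=> _ _ /rowP[j -> [lt_j _ ->]] /rowP[k -> [lt_k _ ->]]; rewrite ltnS => lt_jk.
have cell l c : l < size T -> c < size (nth [::] T l) -> fcell T l.+1 c.+1.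
  by move=> lt_l lt_c; rewrite fcellS lt_l.
split=> [c lt_cj lt_ck|c lt_cj lt_ck lt_kj|lt_size c lt_cj lt_ck].
- by apply: (T_distinct j.+1 k.+1 c.+1); rewrite ?cell // eqSS neq_ltn lt_jk.
- have /andP[] := T_key3 j.+1 k.+1 c.+1 lt_jk (cell _ _ lt_j lt_cj) (cell _ _ lt_k lt_ck) lt_kj.
  by rewrite fcellS => /andP[].
exact: (T_key4 j.+1 k.+1 c.+1 lt_jk lt_size (cell _ _ lt_j lt_cj) (cell _ _ lt_k lt_ck)).
Qed.

Lemma place_rows_qKT1_eq T R : qKT1 T -> key_rows R -> R =i [seq r <- T | r != [::]] ->
  place_rows R = T.
Proof.
move=> T_qKT1 R_key eq_R; have [_ uniq_heads _] := R_key.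
have R_rowP r : r \in R ->
    exists2 j, r = nth [::] T j & [/\ j < size T, r != [::] & head 0 r = j.+1].
  by rewrite eq_R; apply: mem_qKT1_rows.
have row_ofE j : j < size T -> row_of R j.+1 = nth [::] T j.
  move=> lt_j; have [row_nil|row_cons] := eqVneq (nth [::] T j) [::].
    rewrite row_nil; apply: row_of_nil; apply/hasPn => r /R_rowP[k eq_r [_ r_cons ->]].
    by apply: contraNneq r_cons => -[eq_kj]; rewrite eq_r eq_kj row_nil.
  rewrite -{1}(qKT1_head T_qKT1 row_cons) row_of_head //.
  by rewrite eq_R mem_filter row_cons mem_nth.
have size_F : size (place_rows R) = size T.
  rewrite size_place_rows; apply/anti_leq/andP; split.
    by apply/foldr_maxn_leqP => _ /mapP[r /R_rowP[j _ [lt_j _ ->]] ->].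
  have [_ [[->//|/eqP last_cons] _]] := T_qKT1.
  have T_gt0 : 0 < size T by case: (T) last_cons.
  rewrite -nth_last in last_cons.
  have last_in : nth [::] T (size T).-1 \in R by rewrite eq_R mem_filter last_cons mem_nth ?prednK.
  apply: leq_trans (leq_foldr_maxn (map_f (head 0) last_in)).
  by rewrite qKT1_head // prednK.
apply: (eq_from_nth (x0 := [::])) => // j; rewrite size_F => lt_j.
by rewrite -[nth _ _ j]/(frow _ j.+1) frow_place_rows // row_ofE.
Qed.

Lemma colset_perm T T' : (forall c, perm_eq (col T c) (col T' c)) ->
  forall c, colset T c =i colset T' c.
Proof. by move=> eq_cols [|c]; rewrite ?colset0 // !colsetS; apply/perm_mem. Qed.

Lemma psiE V R : key_rows R ->
  psi_rows (sumn (map size V)) (mkseq (fun c => colset V c.+1) (ncols V)) = Some R ->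
  psi V = Some (place_rows R).
Proof.
move=> R_key psi_R; have [_ uniq_heads _] := R_key.
have heads_pos : all (fun r => 0 < head 0 r) R.
  by apply/allP => r; apply: key_rows_head_pos.
by rewrite /psi psi_R uniq_heads heads_pos.
Qed.

Lemma psi_revSSYT V : revSSYT V ->
  exists2 F, psi V = Some F & qKT1 F /\ forall c, perm_eq (col F c) (col V c).
Proof.
move=> V_rev; have [_ _ V_pos V_sorted _] := V_rev.
set cols := mkseq (fun c => colset V c.+1) (ncols V).
have cols_adm : admissible cols.
  move=> c; rewrite !nth_colsets; split; first exact: revSSYT_col_uniq.
    apply/allP => _ /colP[r rV [lt_c ->]].
    by apply: (allP (allP V_pos r rV)); rewrite mem_nth.
  by apply: dominated_col => r; apply: (allP V_sorted).
have le_n : size (nth [::] cols 0) <= sumn (map size V).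
  by rewrite nth_colsets size_col_leq_sumn.
have [R psi_R [R_key R_cols]] := psi_rows_admissible cols_adm le_n.
exists (place_rows R); first exact: psiE.
split; first exact: place_rows_qKT1.
by move=> c; rewrite -(nth_colsets V); apply: perm_trans (perm_col_place_rows R_key c) (R_cols c).
Qed.

Lemma revSSYT_phi_qKT1 T : qKT1 T -> revSSYT (phi T).
Proof.
move=> T_qKT1; have [[T_pos [T_sorted _]] _] := T_qKT1.
have R_key := qKT1_key_rows T_qKT1; have [rows_ok _ _] := R_key.
apply: revSSYT_phi => [_ /(nthP [::])[j _ <-] | c | c]; first exact: (T_sorted j.+1).
  by rewrite -col_filter_nil; apply: key_rows_col_uniq.
rewrite -col_filter_nil; apply/allP => _ /colP[r rR [lt_c ->]].
by have [_ _ /allP] := rows_ok r rR; apply; rewrite mem_nth.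
Qed.

Lemma psi_phi T : qKT1 T -> psi (phi T) = Some T.
Proof.
move=> T_qKT1; set R0 := [seq r <- T | r != [::]]; have R0_key := qKT1_key_rows T_qKT1.
set cols := mkseq (fun c => colset (phi T) c.+1) (ncols (phi T)).
have cols_R0 c : perm_eq (nth [::] cols c) (col R0 c).
  by rewrite nth_colsets col_phi col_filter_nil perm_sort.
have le_n : size R0 <= sumn (map size (phi T)).
  rewrite -size_col0 ?key_rows_nonempty // col_filter_nil -(size_sort geq) -col_phi.
  exact: size_col_leq_sumn.
have [R psi_R perm_R] := psi_rows_key_rows R0_key cols_R0 le_n.
have uniq_heads : uniq (map (head 0) R).
  by rewrite (perm_uniq (perm_map _ perm_R)); case: R0_key.
have R_key : key_rows R.
  by apply: key_rows_sub R0_key _ uniq_heads => r; rewrite (perm_mem perm_R).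
rewrite (psiE R_key psi_R) (place_rows_qKT1_eq T_qKT1 R_key) // => r.
by rewrite (perm_mem perm_R).
Qed.

Theorem theorem5p8 :
  (* psi is well defined on revSSYT, lands in qKT^(1), preserves column sets,
     and phi inverts it *)
  (forall V : seq (seq nat), revSSYT V ->
     exists F, psi V = Some F /\ qKT1 F /\
       (forall c, colset F c =i colset V c) /\ phi F = V) /\
  (* phi maps qKT^(1) into revSSYT, preserves column sets, and psi inverts it *)
  (forall T : seq (seq nat), qKT1 T ->
     revSSYT (phi T) /\ (forall c, colset (phi T) c =i colset T c) /\
     psi (phi T) = Some T).
Proof.
split=> [V V_rev | T T_qKT1].
  have [F psi_F [F_qKT1 F_cols]] := psi_revSSYT V_rev.
  exists F; do !split=> //; first exact: colset_perm.
  exact: phi_eq_revSSYT.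
split; first exact: revSSYT_phi_qKT1.
split; last exact: psi_phi.
by apply: colset_perm => c; rewrite col_phi perm_sort.
Qed.
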